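(* Let $f\in\mathbb{K}[S_M]$ and let $G$ be a set of nonzero polynomials in $\mathbb{K}[S_M]$. The multivariate division algorithm of $f$ by $G$ with respect to the sparse order $\prec$, using the divisibility relation $\mid_\delta$, terminates. Moreover, if $G$ is a sparse Gröbner basis of an ideal $I\subset\mathbb{K}[S_M]$ with respect to $\prec$ and $f\equiv f'\pmod I$, then the remainders of the division algorithm for $f$ and for $f'$ coincide, and this remainder is the same for any sparse Gröbner basis of $I$ with respect to $\prec$.
   Context: Let $\mathbb{K}$ be a field of characteristic $0$ and $M\subset\mathbb{R}^n$ a polytope with $0\in M$. Let $S_M\subset\mathbb{Z}^n$ be the affine semigroup generated by $M\cap\mathbb{Z}^n$ and $S_M^h\subset\mathbb{Z}^{n+1}$ the affine semigroup generated by $\{(s,1):s\in M\cap\mathbb{Z}^n\}$; both are assumed pointed (no nonzero invertible elements). For an affine semigroup $S$, $\mathbb{K}[S]$ is the semigroup algebra with $\mathbb{K}$-basis the monomials $X^s$, $s\in S$, and $X^sX^t=X^{s+t}$. $\mathbb{K}[S_M^h]$ is graded by $\deg X^{(s,d)}=d$. The dehomogenization $\chi:\mathbb{K}[S_M^h]\to\mathbb{K}[S_M]$ is the $\mathbb{K}$-algebra epimorphism $X^{(s,d)}\mapsto X^s$. The affine degree $\delta^A(X^s)$ of a monomial of $\mathbb{K}[S_M]$ is the least $d\in\mathbb{N}$ with $(s,d)\in S_M^h$; for $f=\sum c_sX^s\neq0$, $\delta^A(f)=\max\{\delta^A(X^s):c_s\neq0\}$. The homogenization of $f=\sum c_sX^s$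 is $\chi^{-1}(f)=\sum c_sX^{(s,\delta^A(f))}$. The sparse degree of $f\in\mathbb{K}[S_M^h]$ is $\delta(f):=\delta^A(\chi(f))$. Fix a monomial order $<_M$ on $\mathbb{K}[S_M]$. The sparse order $\prec$ on monomials of $\mathbb{K}[S_M]$: $X^s\prec X^r$ iff $\delta^A(X^s)<\delta^A(X^r)$, or $\delta^A(X^s)=\delta^A(X^r)$ and $X^s<_MX^r$. Divisibility: for monomials of $\mathbb{K}[S_M^h]$, $X^{(s,d_s)}\mid_\delta X^{(r,d_r)}$ if there is a monomial $X^{(t,d_t)}\in\mathbb{K}[S_M^h]$ with $X^{(s,d_s)}X^{(t,d_t)}=X^{(r,d_r)}$ and $\delta(X^{(s,d_s)})+\delta(X^{(t,d_t)})=\delta(X^{(r,d_r)})$; for monomials of $\mathbb{K}[S_M]$, $X^s\mid_\delta X^r$ iff $\chi^{-1}(X^s)\mid_\delta\chi^{-1}(X^r)$. A sparse Gröbner basis of an ideal $I\subset\mathbb{K}[S_M]$ w.r.t. $\prec$ is a subset of $I$ generating $I$ such that for every nonzero $f\in I$ some element $g$ of it satisfies $\mathrm{LM}_\prec(g)\mid_\delta\mathrm{LM}_\prec(f)$. The division algorithm of $f$ by $G$: set $p:=f$, $r:=0$; while $p\neq0$: if there is $g\in G$ with $\mathrm{LM}_\prec(g)\mid_\delta\mathrm{LM}_\prec(p)$, write $\mathrm{LM}_\prec(p)=X^t\,\mathrm{LM}_\prec(g)$ as in the definition of $\mid_\delta$ and replace $p$ by $p-\frac{\mathrm{LC}(p)}{\mathrm{LC}(g)}X^tg$;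 otherwise move the leading term of $p$ to $r$. The output is the remainder $r$. *)

From mathcomp Require Import all_boot all_algebra.
From mathcomp Require Import Rstruct.
From Stdlib Require Import ClassicalEpsilon.

Set Implicit Arguments.
Unset Strict Implicit.
Unset Printing Implicit Defensive.

Import GRing.Theory.
Local Open Scope ring_scope.

Notation R := Rdefinitions.R.

Section Sparse.
Variable n : nat.

Notation exps := 'rV[int]_n.

Definition inPolytope (V : seq 'rV[R]_n) (x : 'rV[R]_n) : Prop :=
  exists lam : 'I_(size V) -> R,
    (forall i, 0 <= lam i) /\ \sum_i lam i = 1 /\
    x = \sum_i lam i *: V`_i.

Definition latticePt (V : seq 'rV[R]_n) (z : exps) : Prop :=
  inPolytope V (map_mx (fun k : int => k%:~R) z).

Definition inSM (V : seq 'rV[R]_n) (s : exps) : Prop :=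
  exists zs : seq exps, (forall z, z \in zs -> latticePt V z) /\
    s = \sum_(z <- zs) z.

(* (s, d) \in S_M^h : the affine semigroup generated by the (z, 1),
   z \in M \cap Z^n.  (Its elements have nonnegative last coordinate,
   so we index them by pairs (s, d) with d : nat.) *)
Definition inShM (V : seq 'rV[R]_n) (s : exps) (d : nat) : Prop :=
  exists zs : seq exps, (forall z, z \in zs -> latticePt V z) /\
    size zs = d /\ s = \sum_(z <- zs) z.

Definition SM_pointed (V : seq 'rV[R]_n) : Prop :=
  forall s, inSM V s -> inSM V (- s) -> s = 0.

Definition isAffDeg (V : seq 'rV[R]_n) (s : exps) (d : nat) : Prop :=
  inShM V s d /\ forall d', inShM V s d' -> (d <= d')%N.

Definition affdeg (V : seq 'rV[R]_n) (s : exps) : nat :=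
  epsilon (inhabits 0%N) (isAffDeg V s).

(* Divisibility |_delta between monomials X^(s,ds), X^(r,dr) of K[S_M^h];
   the sparse degree of the monomial X^(t,dt) is delta^A(X^t). *)
Definition hdvd (V : seq 'rV[R]_n) (s : exps) (ds : nat) (r : exps) (dr : nat)
  : Prop :=
  exists (t : exps) (dt : nat), inShM V t dt /\ s + t = r /\ (ds + dt = dr)%N /\
    (affdeg V s + affdeg V t = affdeg V r)%N.

(* Divisibility |_delta between monomials X^s, X^r of K[S_M], via the
   homogenizations chi^{-1}(X^s) = X^(s, delta^A(X^s)). *)
Definition sdvd (V : seq 'rV[R]_n) (s r : exps) : Prop :=
  hdvd V s (affdeg V s) r (affdeg V r).

Definition monomial_order (V : seq 'rV[R]_n) (ltM : exps -> exps -> Prop)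
  : Prop :=
  [/\ (forall s, inSM V s -> ~ ltM s s),
      (forall s t u, inSM V s -> inSM V t -> inSM V u ->
          ltM s t -> ltM t u -> ltM s u),
      (forall s t, inSM V s -> inSM V t -> s <> t -> ltM s t \/ ltM t s),
      (forall s t u, inSM V s -> inSM V t -> inSM V u ->
          ltM s t -> ltM (s + u) (t + u)) &
      (forall s, inSM V s -> s <> 0 -> ltM 0 s)].

Definition sprec (V : seq 'rV[R]_n) (ltM : exps -> exps -> Prop) (s r : exps)
  : Prop :=
  (affdeg V s < affdeg V r)%N \/ (affdeg V s = affdeg V r /\ ltM s r).

(* Polynomials: K-valued coefficient functions on Z^n.  An element of
   K[S_M] is such a function with finite support contained in S_M;
   f corresponds to sum_s f(s) X^s. *)
Variable K : fieldType.

Definition spoly := exps -> K.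

Definition pzero : spoly := fun _ => 0.
Definition padd (f g : spoly) : spoly := fun u => f u + g u.
Definition psub (f g : spoly) : spoly := fun u => f u - g u.

Definition inKS (V : seq 'rV[R]_n) (f : spoly) : Prop :=
  (exists D : seq exps, forall s, f s != 0 -> s \in D) /\
  (forall s, f s != 0 -> inSM V s).

Definition supp (f : spoly) : seq exps :=
  epsilon (inhabits [::]) (fun D : seq exps => uniq D /\ forall s, (f s != 0) = (s \in D)).

Definition pmul (f g : spoly) : spoly := fun u =>
  \sum_(s <- supp f) \sum_(t <- supp g | s + t == u) f s * g t.

Definition pshift (t : exps) (g : spoly) : spoly := fun u => g (u - t).

Definition isLM (V : seq 'rV[R]_n) (ltM : exps -> exps -> Prop) (p : spoly) (m : exps)
  : Prop :=
  p m != 0 /\ forall s, p s != 0 -> s <> m -> sprec V ltM s m.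

Definition LM (V : seq 'rV[R]_n) (ltM : exps -> exps -> Prop) (p : spoly) : exps :=
  epsilon (inhabits 0) (isLM V ltM p).

Definition LC (V : seq 'rV[R]_n) (ltM : exps -> exps -> Prop) (p : spoly) : K :=
  p (LM V ltM p).

Definition LT (V : seq 'rV[R]_n) (ltM : exps -> exps -> Prop) (p : spoly) : spoly :=
  fun u => if u == LM V ltM p then LC V ltM p else 0.

Definition is_ideal (V : seq 'rV[R]_n) (I : spoly -> Prop) : Prop :=
  [/\ (forall f, I f -> inKS V f), I pzero,
      (forall f g, I f -> I g -> I (padd f g)) &
      (forall h f, inKS V h -> I f -> I (pmul h f))].

Definition generates (V : seq 'rV[R]_n) (G I : spoly -> Prop) : Prop :=
  forall f, I f <->
    exists (k : nat) (h g : 'I_k -> spoly),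
      (forall i, inKS V (h i) /\ G (g i)) /\
      f = (fun u => \sum_i pmul (h i) (g i) u).

Definition sparse_groebner (V : seq 'rV[R]_n) (ltM : exps -> exps -> Prop)
  (G I : spoly -> Prop) : Prop :=
  [/\ (forall g, G g -> I g), generates V G I &
      (forall f, I f -> f <> pzero ->
         exists g, G g /\ sdvd V (LM V ltM g) (LM V ltM f))].

(* The division algorithm.  States are pairs (p, r); one iteration of
   the while loop (executed while p <> 0) is the relation [div_step]. *)
Definition div_step (V : seq 'rV[R]_n) (ltM : exps -> exps -> Prop)
  (G : spoly -> Prop) (st st' : spoly * spoly) : Prop :=
  let: (p, r) := st in let: (p', r') := st' in
  p <> pzero /\
  ( (exists (g : spoly) (t : exps) (dt : nat),
        G g /\
        (* LM(p) = X^t LM(g) as in the definition of |_delta *)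
        inShM V t dt /\ LM V ltM g + t = LM V ltM p /\
        (affdeg V (LM V ltM g) + dt = affdeg V (LM V ltM p))%N /\
        (affdeg V (LM V ltM g) + affdeg V t = affdeg V (LM V ltM p))%N /\
        p' = psub p (fun u => (LC V ltM p / LC V ltM g) * pshift t g u) /\
        r' = r)
  \/ ((forall g, G g -> ~ sdvd V (LM V ltM g) (LM V ltM p)) /\
        p' = psub p (LT V ltM p) /\ r' = padd r (LT V ltM p)) ).

(* [div_run G st r]: some execution of the algorithm from state st stops
   (p = 0) with output remainder r. *)
Inductive div_run (V : seq 'rV[R]_n) (ltM : exps -> exps -> Prop)
  (G : spoly -> Prop) : spoly * spoly -> spoly -> Prop :=
| div_run_stop r : div_run V ltM G (pzero, r) r
| div_run_next st st' r :
    div_step V ltM G st st' -> div_run V ltM G st' r -> div_run V ltM G st r.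

Definition remainder (V : seq 'rV[R]_n) (ltM : exps -> exps -> Prop)
  (G : spoly -> Prop) (f r : spoly) : Prop :=
  div_run V ltM G (f, pzero) r.

Definition div_terminates (V : seq 'rV[R]_n) (ltM : exps -> exps -> Prop)
  (G : spoly -> Prop) (f : spoly) : Prop :=
  Acc (fun st' st => div_step V ltM G st st') (f, pzero).

End Sparse.

(* Every element of S_M has only finitely many ≺-predecessors in S_M: the lattice
   points of M are bounded, an element of affine degree d is a sum of d of them, and
   ≺ refines the affine degree. Hence ≺ is well founded on S_M. A step of the division
   replaces p by a polynomial whose support lies strictly below LM(p); for a reduction
   by g this uses that X^t respects ≺ on the support of g because the affine degrees
   add up in LM(p) = X^t LM(g).
   Along any run, f - r stays in I and no monomial of r is |_δ-divisible by a leading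
   monomial of G. So if two remainders r, r' differ, the leading monomial of r - r' ∈ I
   lies in the support of r or of r', yet is |_δ-divisible by the leading monomial of
   an element of a Gröbner basis: a contradiction. *)

From mathcomp Require Import all_boot all_algebra Rstruct.
From Stdlib Require Import Wf_nat Classical ClassicalEpsilon FunctionalExtensionality.
From mathcomp Require Import ring zify.
Import GRing.Theory Num.Theory order.Order.POrderTheory.
Local Open Scope ring_scope.
Set Implicit Arguments.
Unset Strict Implicit.
Unset Printing Implicit Defensive.

Lemma Acc_of_finite_predecessors (T : eqType) (lt : T -> T -> Prop) (L : seq T) m :
  (forall x y z, lt x y -> lt y z -> lt x z) -> (forall x, ~ lt x x) ->
  (forall s, lt s m -> s \in L) -> Acc lt m.
Proof.
move=> lt_trans lt_irr; have [k] := ubnP (size L).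
elim: k L m => [|k IH] L m; first by rewrite ltn0.
move=> /ltnSE sizeL predL; constructor=> s lt_sm.
apply: (IH [seq x <- L | x != s]) => [|u lt_us].
  have sL : s \in L by apply: predL.
  rewrite size_filter; change (count (predC (pred1 s)) L < k)%N.
  have := count_predC (pred1 s) L; move: sL; rewrite -has_pred1 has_count; lia.
rewrite mem_filter predL; last exact: lt_trans lt_us lt_sm.
by rewrite andbT; apply/eqP=> eq_us; apply: (lt_irr s); rewrite -{1}eq_us.
Qed.

Section Semigroup.
Variables (n : nat) (V : seq 'rV[R]_n).
Local Notation exps := 'rV[int]_n.

Lemma inShM_add s a t b : inShM V s a -> inShM V t b -> inShM V (s + t) (a + b).
Proof.
move=> [zs [zsM [<- ->]]] [zs' [zs'M [<- ->]]].
exists (zs ++ zs'); split; last by rewrite size_cat big_cat.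
by move=> z; rewrite mem_cat => /orP[]; [apply: zsM | apply: zs'M].
Qed.

Lemma inSM_inShM s : inSM V s <-> exists d, inShM V s d.
Proof.
split; first by move=> [zs [zsM ->]]; exists (size zs), zs.
by move=> [d [zs [zsM [_ ->]]]]; exists zs.
Qed.

Lemma inSM0 : inSM V 0.
Proof. by exists [::]; rewrite big_nil. Qed.

Lemma inSM_add s t : inSM V s -> inSM V t -> inSM V (s + t).
Proof.
move=> /inSM_inShM[a sa] /inSM_inShM[b tb]; apply/inSM_inShM.
by exists (a + b)%N; apply: inShM_add.
Qed.

Lemma isAffDeg_exists s : inSM V s -> exists d, isAffDeg V s d.
Proof.
move=> /inSM_inShM sS.
have [d [[sd dmin] _]] := @dec_inh_nat_subset_has_unique_least_element (inShM V s)
  (fun d => classic _) sS.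
by exists d; split=> // d' /dmin/leP.
Qed.

Lemma affdegP s : inSM V s -> isAffDeg V s (affdeg V s).
Proof. by move=> /isAffDeg_exists sd; apply: epsilon_spec. Qed.

Lemma affdegD_leq s t : inSM V s -> inSM V t ->
  (affdeg V (s + t) <= affdeg V s + affdeg V t)%N.
Proof.
move=> sS tS; have [s_d _] := affdegP sS; have [t_d _] := affdegP tS.
by have [_] := affdegP (inSM_add sS tS); apply; apply: inShM_add.
Qed.

Lemma latticePt_bounded :
  exists N : nat, forall z, latticePt V z -> forall j, `|z 0 j| < N%:Z.
Proof.
pose T : R := \sum_(i < size V) \sum_(j < n) `|V`_i 0 j|.
have T_ge0 : 0 <= T by apply: sumr_ge0 => i _; apply: sumr_ge0.
have V_le_T (i : 'I_(size V)) j : `|V`_i 0 j| <= T.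
  rewrite /T (bigD1 i) //= (bigD1 j) //= -addrA lerDl.
  by rewrite addr_ge0 //; apply: sumr_ge0 => *; [|apply: sumr_ge0].
exists (Num.bound T) => z [lam [lam_ge0 [lam_sum1 zE]]] j.
have zjE : (z 0 j)%:~R = \sum_i lam i * V`_i 0 j.
  have := congr1 (fun M : 'rV[R]_n => M 0 j) zE; rewrite /= mxE => ->.
  by rewrite summxE; apply: eq_bigr => i _; rewrite mxE.
have zj_le_T : `|(z 0 j)%:~R : R| <= T.
  rewrite zjE; apply: le_trans (ler_norm_sum _ _ _) _.
  apply: le_trans (_ : \sum_i lam i * T <= T); last by rewrite -mulr_suml lam_sum1 mul1r.
  by apply: ler_sum => i _; rewrite normrM ger0_norm // ler_wpM2l.
rewrite -(ltr_int R) intr_norm; apply: le_lt_trans zj_le_T _.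
by rewrite -pmulrn archi_boundP.
Qed.

Lemma box_finite (N : nat) :
  exists L : seq exps, forall z : exps, (forall j, `|z 0 j| < N%:Z) -> z \in L.
Proof.
exists [seq \row_j ((f j : nat)%:Z - N%:Z) | f : {ffun 'I_n -> 'I_(N + N).+1}].
move=> z zN; apply/imageP; exists [ffun j : 'I_n => inord (absz (z 0 j + N%:Z))] => //.
have zjN (j : 'I_n) : (absz (z 0 j + N%:Z)%R <= N + N)%N.
  by have := zN j; rewrite ltr_norml; lia.
apply/rowP => j; rewrite mxE ffunE inordK ?ltnS ?zjN // abszE ger0_norm ?addrK //.
by have := zN j; rewrite ltr_norml; lia.
Qed.

Lemma latticePt_finite : exists Lat : seq exps, forall z, latticePt V z -> z \in Lat.
Proof.
have [N latN] := latticePt_bounded; have [L boxL] := box_finite N.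
by exists L => z /latN; apply: boxL.
Qed.

Definition sumset (Lat : seq exps) (k : nat) : seq exps :=
  iter k (fun S => [seq x + y | x <- Lat, y <- S]) [:: 0].

Lemma inShM_sumset Lat : (forall z, latticePt V z -> z \in Lat) ->
  forall s k, inShM V s k -> s \in sumset Lat k.
Proof.
move=> LatP s k [zs [zsM [<- ->]]]; elim: zs zsM => [|z zs IH] zsM /=.
  by rewrite big_nil mem_seq1.
rewrite big_cons; apply/allpairsP; exists (z, \sum_(x <- zs) x); split=> //.
  by apply/LatP/zsM; rewrite mem_head.
by apply: IH => x xzs; apply: zsM; rewrite inE xzs orbT.
Qed.

Lemma affdeg_leq_finite d :
  exists L : seq exps, forall s, inSM V s -> (affdeg V s <= d)%N -> s \in L.
Proof.
have [Lat LatP] := latticePt_finite.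
exists (flatten [seq sumset Lat k | k <- iota 0 d.+1]) => s sS sd.
apply/flattenP; exists (sumset Lat (affdeg V s)).
  by apply: map_f; rewrite mem_iota.
by have [s_d _] := affdegP sS; apply: inShM_sumset.
Qed.

End Semigroup.

Section SparseOrder.
Variables (n : nat) (V : seq 'rV[R]_n) (ltM : 'rV[int]_n -> 'rV[int]_n -> Prop).
Hypothesis ltM_order : monomial_order V ltM.
Local Notation "s ≺ r" := (sprec V ltM s r) (at level 70).

Lemma sprec_irr s : inSM V s -> ~ s ≺ s.
Proof.
by case: ltM_order => ltM_irr _ _ _ _ sS [|[_ /ltM_irr]]; rewrite ?ltnn.
Qed.

Lemma sprec_trans s t u : inSM V s -> inSM V t -> inSM V u ->
  s ≺ t -> t ≺ u -> s ≺ u.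
Proof.
case: ltM_order => _ ltM_trans _ _ _ sS tS uS [st|[st st']] [tu|[tu tu']].
- by left; lia.
- by left; lia.
- by left; lia.
- by right; split; [rewrite st | apply: ltM_trans st' tu'].
Qed.

Lemma sprec_total s t : inSM V s -> inSM V t -> s <> t -> s ≺ t \/ t ≺ s.
Proof.
case: ltM_order => _ _ ltM_total _ _ sS tS neq_st.
case: (ltngtP (affdeg V s) (affdeg V t)) => [st|ts|st]; [by left; left | by right; left|].
by case: (ltM_total s t sS tS neq_st); [left | right]; right.
Qed.

Lemma sprec_max x D : (forall s, s \in x :: D -> inSM V s) ->
  exists2 m, m \in x :: D & forall s, s \in x :: D -> s <> m -> s ≺ m.
Proof.
elim: D x => [|y D IH] x DS.
  by exists x; rewrite ?mem_head // => s; rewrite mem_seq1 => /eqP.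
have [|m mD m_max] := IH y => [s sD|]; first by apply: DS; rewrite inE sD orbT.
have xS : inSM V x by apply: DS; rewrite mem_head.
have mS : inSM V m by apply: DS; rewrite inE mD orbT.
have [mx|x_below_m] : m ≺ x \/ (x <> m -> x ≺ m).
  have [->|neq_xm] := classic (x = m); first by right.
  by case: (sprec_total xS mS neq_xm); [right | left].
- exists x; first exact: mem_head.
  move=> s; rewrite inE => /orP[/eqP->//|sD] neq_sx.
  have [->//|neq_sm] := classic (s = m).
  have sS : inSM V s by apply: DS; rewrite inE sD orbT.
  exact: sprec_trans sS mS xS (m_max s sD neq_sm) mx.
- exists m; first by rewrite inE mD orbT.
  by move=> s; rewrite inE => /orP[/eqP->|/m_max].
Qed.

Lemma sprec_addr s m t : inSM V s -> inSM V m -> inSM V t -> s ≺ m ->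
  (affdeg V m + affdeg V t)%N = affdeg V (m + t) -> s + t ≺ m + t.
Proof.
move=> sS mS tS sm deg_mt; have := affdegD_leq sS tS.
case: sm => [sm|[sm sm']] st; first by left; lia.
case: ltM_order => _ _ _ ltM_add _.
case: (ltngtP (affdeg V (s + t)) (affdeg V (m + t))) => [|?|]; [by left | lia |].
by right; split=> //; apply: ltM_add.
Qed.

Definition sprec_SM s m := [/\ inSM V s, inSM V m & s ≺ m].

Lemma sprec_SM_wf : well_founded sprec_SM.
Proof.
move=> m; have [L L_deg] := affdeg_leq_finite V (affdeg V m).
apply: (Acc_of_finite_predecessors (L := L)).
- by move=> s t u [sS tS st] [_ uS tu]; split=> //; apply: sprec_trans st tu.
- by move=> s [sS _]; apply: sprec_irr.
- by move=> s [sS _ sm]; apply: L_deg => //; case: sm => [/ltnW|[->]].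
Qed.

End SparseOrder.

Section Polynomials.
Variables (n : nat) (V : seq 'rV[R]_n) (K : fieldType).
Local Notation exps := 'rV[int]_n.
Local Notation poly := (spoly n K).

Definition fin_supp (f : poly) := exists D : seq exps, forall s, f s != 0 -> s \in D.

Definition monomial (c : K) (t : exps) : poly := fun u => if u == t then c else 0.

Lemma fin_supp_monomial c t : fin_supp (monomial c t).
Proof.
by exists [:: t] => s; rewrite /monomial; case: (s =P t) => [->|]; rewrite ?mem_seq1 ?eqxx.
Qed.

Lemma addr_neq0 (a b : K) : a + b != 0 -> (a != 0) || (b != 0).
Proof.
by apply: contraNT; rewrite negb_or => /andP[/negPn/eqP-> /negPn/eqP->]; rewrite addr0.
Qed.

Lemma inKS_supp_sub (f g h : poly) :
  (forall u, h u != 0 -> (f u != 0) || (g u != 0)) -> inKS V f -> inKS V g -> inKS V h.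
Proof.
move=> hfg [[Df Df_supp] fS] [[Dg Dg_supp] gS]; split.
  by exists (Df ++ Dg) => u /hfg /orP[/Df_supp|/Dg_supp]; rewrite mem_cat => ->; rewrite ?orbT.
by move=> u /hfg /orP[/fS|/gS].
Qed.

Lemma inKS0 : inKS V (@pzero n K).
Proof. by split; [exists [::]|] => s; rewrite eqxx. Qed.

Lemma inKS_add (f g : poly) : inKS V f -> inKS V g -> inKS V (padd f g).
Proof. by apply: inKS_supp_sub => u /addr_neq0. Qed.

Lemma inKS_sub (f g : poly) : inKS V f -> inKS V g -> inKS V (psub f g).
Proof. by apply: inKS_supp_sub => u /addr_neq0; rewrite oppr_eq0. Qed.

Lemma inKS_monomial c t : (c != 0 -> inSM V t) -> inKS V (monomial c t).
Proof.
move=> tS; split=> [|s]; first exact: fin_supp_monomial.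
by rewrite /monomial; case: (s =P t) => [->|]; rewrite ?eqxx.
Qed.

Lemma inKS_scale_shift c t (g : poly) :
  inSM V t -> inKS V g -> inKS V (fun u => c * pshift t g u).
Proof.
rewrite /pshift => tS [[D D_supp] gS].
have g_neq0 u : c * g (u - t) != 0 -> g (u - t) != 0.
  by apply: contraNneq => ->; rewrite mulr0.
split=> [|u /g_neq0 /gS utS]; last by rewrite -(subrK t u); apply: inSM_add.
exists [seq s + t | s <- D] => u /g_neq0 /D_supp uD.
by apply/mapP; exists (u - t); rewrite ?subrK.
Qed.

Lemma supp_spec (f : poly) : fin_supp f ->
  uniq (supp f) /\ forall s, (f s != 0) = (s \in supp f).
Proof.
move=> [D D_supp]; rewrite /supp; apply: (epsilon_spec (inhabits [::])
  (fun L : seq exps => uniq L /\ forall s, (f s != 0) = (s \in L))).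
exists (undup [seq s <- D | f s != 0]); split=> [|s]; first exact: undup_uniq.
by rewrite mem_undup mem_filter; case: (boolP (f s != 0)) => //= /D_supp ->.
Qed.

Lemma pmul_monomial c t (g : poly) : fin_supp g ->
  pmul (monomial c t) g = (fun u => c * pshift t g u).
Proof.
move=> g_fin; apply: functional_extensionality => u; rewrite /pmul /pshift.
have [g_uniq g_supp] := supp_spec g_fin.
have [m_uniq m_supp] := supp_spec (fin_supp_monomial c t).
have [c0|c_neq0] := eqVneq c 0.
  have -> : supp (monomial c t) = [::].
    case: (supp _) m_supp => [//|s L] /(_ s).
    by rewrite mem_head /monomial c0 if_same eqxx.
  by rewrite big_nil c0 mul0r.
have -> : supp (monomial c t) = [:: t].
  apply: perm_small_eq => //; apply: uniq_perm => // s.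
  by rewrite -m_supp mem_seq1 /monomial; case: (s =P t) => //= _; rewrite eqxx.
rewrite big_seq1 /monomial eqxx -big_distrr /=; congr (c * _).
rewrite (eq_bigl (pred1 (u - t))) => [|s]; last first.
  by apply/eqP/eqP => [<-|->]; rewrite ?[t + _]addrC ?addrK ?subrK.
have [ut_supp|ut_nsupp] := boolP (u - t \in supp g).
  by rewrite -big_filter filter_pred1_uniq // big_seq1.
by rewrite big_hasC ?has_pred1 //; move: ut_nsupp; rewrite -g_supp negbK => /eqP ->.
Qed.

End Polynomials.

Section Division.
Variables (n : nat) (V : seq 'rV[R]_n) (ltM : 'rV[int]_n -> 'rV[int]_n -> Prop).
Hypothesis ltM_order : monomial_order V ltM.
Variable K : fieldType.
Local Notation poly := (spoly n K).
Local Notation LM := (LM V ltM).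
Local Notation LC := (LC V ltM).

Lemma isLM_exists (p : poly) : inKS V p -> p <> @pzero n K -> exists m, isLM V ltM p m.
Proof.
move=> [[D D_supp] pS] p_neq0.
have [s ps] : exists s, p s != 0.
  apply: NNPP => no_s; apply: p_neq0; apply: functional_extensionality => s.
  by apply/eqP/negPn/negP => ps; apply: no_s; exists s.
have sD : s \in [seq u <- D | p u != 0] by rewrite mem_filter ps D_supp.
case E: [seq u <- D | p u != 0] sD => [//|x L] _.
have supp_E u : (u \in x :: L) = (p u != 0).
  by rewrite -E mem_filter; case: (boolP (p u != 0)) => //= /D_supp.
have [u|m mL m_max] := sprec_max ltM_order (x := x) (D := L).
  by rewrite supp_E => /pS.
by exists m; split=> [|u]; rewrite -?supp_E // => uL; apply: m_max.
Qed.

Lemma LMP (p : poly) : inKS V p -> p <> @pzero n K -> isLM V ltM p (LM p).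
Proof. by move=> pKS /(isLM_exists pKS) LM_ex; apply: epsilon_spec. Qed.

Lemma inKS_LT (p : poly) : inKS V p -> inKS V (LT V ltM p).
Proof. by move=> pKS; apply: inKS_monomial => /pKS.2. Qed.

Lemma ideal_scale_shift (I : poly -> Prop) (g : poly) c t :
  is_ideal V I -> I g -> inSM V t -> I (fun u => c * pshift t g u).
Proof.
move=> [I_KS _ _ I_mul] Ig tS; rewrite -pmul_monomial; last exact: (I_KS _ Ig).1.
by apply: I_mul => //; apply: inKS_monomial.
Qed.

Lemma ideal_sub (I : poly -> Prop) (f g : poly) :
  is_ideal V I -> I f -> I g -> I (psub f g).
Proof.
move=> I_ideal If Ig; have [_ _ I_add _] := I_ideal.
have := I_add _ _ If (ideal_scale_shift (-1) I_ideal Ig (inSM0 V)).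
by congr I; apply: functional_extensionality => u; rewrite /padd /psub /pshift subr0 mulN1r.
Qed.

Definition supp_below (p : poly) m := forall u, p u != 0 -> sprec_SM V ltM u m.

Lemma sub_lead_below (p q : poly) : inKS V p -> p <> @pzero n K -> inKS V q ->
  q (LM p) = p (LM p) -> (forall u, q u != 0 -> u <> LM p -> sprec V ltM u (LM p)) ->
  inKS V (psub p q) /\ supp_below (psub p q) (LM p).
Proof.
move=> pKS p_neq0 qKS q_LM q_below; have [pLM p_max] := LMP pKS p_neq0.
have p'KS := inKS_sub pKS qKS; split=> // u p'u.
split; [exact: p'KS.2 | exact: pKS.2 |].
have [eq_u|/eqP neq_u] := eqVneq u (LM p).
  by move: p'u; rewrite eq_u /psub q_LM subrr eqxx.
by case/orP: (addr_neq0 p'u) => [/p_max|]; last rewrite oppr_eq0 => /q_below; apply.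
Qed.

Lemma shift_lead_below (p g : poly) t : inKS V g -> g <> @pzero n K -> inSM V t ->
  LM g + t = LM p -> (affdeg V (LM g) + affdeg V t)%N = affdeg V (LM p) ->
  LC p / LC g * pshift t g (LM p) = p (LM p) /\
  forall u, LC p / LC g * pshift t g u != 0 -> u <> LM p -> sprec V ltM u (LM p).
Proof.
move=> gKS g_neq0 tS LMgt deg_gt; have [gLM g_max] := LMP gKS g_neq0; split.
  by rewrite /pshift -{1}LMgt addrK divfK.
move=> u qu neq_u; have gu : g (u - t) != 0.
  by apply: contraNneq qu; rewrite /pshift => ->; rewrite mulr0.
have neq_ut : u - t <> LM g by move=> eq_ut; apply: neq_u; rewrite -LMgt -eq_ut subrK.
have := sprec_addr ltM_order (gKS.2 _ gu) (gKS.2 _ gLM) tS (g_max _ gu neq_ut).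
by rewrite subrK LMgt; apply.
Qed.

Section Algorithm.
Variable G : poly -> Prop.
Hypothesis G_nz : forall g, G g -> inKS V g /\ g <> @pzero n K.

Lemma div_step_below p r p' r' :
  inKS V p -> div_step V ltM G (p, r) (p', r') -> inKS V p' /\ supp_below p' (LM p).
Proof.
move=> pKS [p_neq0 [[g [t [dt [Gg [t_d [LMgt [_ [deg_gt [-> _]]]]]]]]] | [_ [-> _]]]].
  have [gKS g_neq0] := G_nz Gg; have tS : inSM V t by apply/inSM_inShM; exists dt.
  have [q_LM q_below] := shift_lead_below gKS g_neq0 tS LMgt deg_gt.
  exact: sub_lead_below pKS p_neq0 (inKS_scale_shift _ tS gKS) q_LM q_below.
apply: sub_lead_below => //; [exact: inKS_LT | by rewrite /LT eqxx |].
by move=> u; rewrite /LT; case: (u =P LM p) => [-> _ /(_ erefl) | _] //; rewrite eqxx.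
Qed.

Lemma Acc_div_below m p r : inKS V p -> supp_below p m ->
  Acc (fun st' st => div_step V ltM G st st') (p, r).
Proof.
elim: (sprec_SM_wf ltM_order m) p r => {}m _ IH p r pKS p_below.
constructor=> [[p' r']] step; have [p'KS p'_below] := div_step_below pKS step.
apply: IH p'KS p'_below; apply: p_below.
by case: step => p_neq0 _; case: (LMP pKS p_neq0).
Qed.

Lemma div_terminates_inKS f : inKS V f -> div_terminates V ltM G f.
Proof.
move=> fKS; constructor=> [[p' r']] /(div_step_below fKS)[p'KS p'_below].
exact: Acc_div_below p'KS p'_below.
Qed.

End Algorithm.

Definition reduced (G : poly -> Prop) (r : poly) :=
  forall s, r s != 0 -> forall g, G g -> ~ sdvd V (LM g) s.

Lemma div_run_inv (G I : poly -> Prop) : is_ideal V I -> (forall g, G g -> I g) ->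
  forall st r, div_run V ltM G st r -> inKS V st.1 -> inKS V st.2 -> reduced G st.2 ->
  [/\ inKS V r, reduced G r & I (psub (padd st.1 st.2) r)].
Proof.
move=> I_ideal GI; have [I_KS I0 I_add _] := I_ideal.
move=> st r; elim=> {st r} [r|[p r0] [p' r0'] r step _ IH] /= pKS r0KS r0_red.
  split=> //; congr I: I0; apply: functional_extensionality => u.
  by rewrite /psub /padd /pzero add0r subrr.
case: step => _ [[g [t [dt [Gg [t_d [_ [_ [_ [p'E r0'E]]]]]]]]] | [no_div [p'E r0'E]]].
  subst r0'; have tS : inSM V t by apply/inSM_inShM; exists dt.
  have p'KS : inKS V p' by rewrite p'E; apply/inKS_sub/inKS_scale_shift/I_KS/GI.
  have [rKS r_red Ir] := IH p'KS r0KS r0_red; split=> //.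
  have := I_add _ _ Ir (ideal_scale_shift (LC p / LC g) I_ideal (GI _ Gg) tS).
  by congr I; apply: functional_extensionality => u; rewrite /= p'E /padd /psub /=; ring.
have p'KS : inKS V p' by rewrite p'E; apply/inKS_sub/inKS_LT.
have r0'KS : inKS V r0' by rewrite r0'E; apply/inKS_add/inKS_LT.
have r0'_red : reduced G r0'.
  move=> s; rewrite r0'E /padd /LT; case: (s =P LM p) => [-> _|_]; first exact: no_div.
  by rewrite addr0; apply: r0_red.
have [rKS r_red Ir] := IH p'KS r0'KS r0'_red; split=> //.
move: Ir; congr I; apply: functional_extensionality => u.
by rewrite /= p'E r0'E /padd /psub /=; ring.
Qed.

Lemma remainder_inv (G I : poly -> Prop) f r : is_ideal V I -> (forall g, G g -> I g) ->
  inKS V f -> remainder V ltM G f r -> [/\ inKS V r, reduced G r & I (psub f r)].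
Proof.
move=> I_ideal GI fKS fr.
have [|rKS r_red Ifr] := div_run_inv I_ideal GI fr fKS (inKS0 V K).
  by move=> s; rewrite eqxx.
split=> //; congr I: Ifr; apply: functional_extensionality => u.
by rewrite /psub /padd /pzero addr0.
Qed.

Lemma remainder_unique (G G' I : poly -> Prop) f f' r r' : is_ideal V I ->
  sparse_groebner V ltM G I -> sparse_groebner V ltM G' I ->
  inKS V f -> inKS V f' -> I (psub f f') ->
  remainder V ltM G f r -> remainder V ltM G' f' r' -> r = r'.
Proof.
move=> I_ideal [GI _ G_LM] [G'I _ G'_LM] fKS f'KS Iff' fr f'r'.
have [I_KS _ I_add _] := I_ideal.
have [_ r_red Ifr] := remainder_inv I_ideal GI fKS fr.
have [_ r'_red If'r'] := remainder_inv I_ideal G'I f'KS f'r'.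
have Id : I (psub r r').
  have := ideal_sub I_ideal (I_add _ _ Iff' If'r') Ifr.
  by congr I; apply: functional_extensionality => u; rewrite /padd /psub; ring.
have [d0|d_neq0] := classic (psub r r' = @pzero n K).
  apply: functional_extensionality => u; apply/eqP; rewrite -subr_eq0.
  by have := congr1 (fun h => h u) d0; rewrite /psub => ->.
have [dLM _] := LMP (I_KS _ Id) d_neq0.
case/orP: (addr_neq0 dLM) => [r_LM|]; last rewrite oppr_eq0 => r'_LM.
  by have [g [Gg g_dvd]] := G_LM _ Id d_neq0; case: (r_red _ r_LM g Gg g_dvd).
by have [g [Gg g_dvd]] := G'_LM _ Id d_neq0; case: (r'_red _ r'_LM g Gg g_dvd).
Qed.

End Division.

Theorem mainTheorem1
  (K : fieldType) (n : nat) (V : seq 'rV[R]_n)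
  (ltM : 'rV[int]_n -> 'rV[int]_n -> Prop) :
  [pchar K] =i pred0 ->
  inPolytope V 0 ->
  SM_pointed V ->
  monomial_order V ltM ->
  forall (G : spoly n K -> Prop) (f : spoly n K),
    (forall g, G g -> inKS V g /\ g <> @pzero n K) ->
    inKS V f ->
    div_terminates V ltM G f /\
    (forall I : spoly n K -> Prop,
       is_ideal V I -> sparse_groebner V ltM G I ->
       (forall f' : spoly n K, inKS V f' -> I (psub f f') ->
          forall r r', remainder V ltM G f r -> remainder V ltM G f' r' ->
          r = r') /\
       (forall G' : spoly n K -> Prop,
          (forall g, G' g -> inKS V g /\ g <> @pzero n K) ->
          sparse_groebner V ltM G' I ->
          forall r r', remainder V ltM G f r -> remainder V ltM G' f r' ->
          r = r')).
Proof.
move=> _ _ _ ltM_order G f G_nz fKS.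
split=> [|I I_ideal G_gb]; first exact: div_terminates_inKS.
split=> [f' f'KS Iff' | G' _ G'_gb] r r' fr f'r'.
  exact: (remainder_unique ltM_order I_ideal G_gb G_gb fKS f'KS Iff' fr f'r').
apply: (remainder_unique ltM_order I_ideal G_gb G'_gb fKS fKS _ fr f'r').
have [_ I0 _ _] := I_ideal; congr I: I0; apply: functional_extensionality => u.
by rewrite /psub /pzero subrr.
Qed.
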